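(* Let $G$ be a claw-free graph, let $L$ be an induced path or a hole of $G$, and let $\mathbf{j}\notin L$ be a vertex such that $\Gamma_L(\mathbf{j})$ contains three vertices $\mathbf{k}_0,\mathbf{k}_1,\mathbf{k}_2$ with $\mathbf{k}_0\mathbf{k}_1$ and $\mathbf{k}_1\mathbf{k}_2$ edges of $L$. If $\mathbf{j}$ has an additional neighbour $\mathbf{u}\in L\setminus\{\mathbf{k}_0,\mathbf{k}_1,\mathbf{k}_2\}$, then $\mathbf{u}$ is adjacent to at least one of $\mathbf{k}_0$ or $\mathbf{k}_2$.
   Context: A hole is an induced cycle of length at least 4; an induced path is a vertex set whose induced edges are exactly those between consecutive vertices. Claw-free: no induced $K_{1,3}$. $\Gamma_L(\mathbf{j})$ is the set of neighbours of $\mathbf{j}$ in $L$. *)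

From mathcomp Require Import all_boot.
Set Implicit Arguments. Unset Strict Implicit. Unset Printing Implicit Defensive.

(* A simple graph on a finite vertex type T is a symmetric irreflexive
   relation e : rel T (hypotheses stated in the theorem). *)

Definition claw_free (T : finType) (e : rel T) : Prop :=
  forall x a b c : T, a != b -> b != c -> a != c ->
    e x a -> e x b -> e x c -> [|| e a b, e b c | e a c].

Definition path_edges (T : eqType) (L : seq T) : seq (T * T) := zip L (behead L).
Definition cycle_edges (T : eqType) (L : seq T) : seq (T * T) := zip L (rot 1 L).

Definition is_edge_of (T : eqType) (E : seq (T * T)) (x y : T) : bool :=
  ((x, y) \in E) || ((y, x) \in E).

Definition induced_path (T : finType) (e : rel T) (L : seq T) : Prop :=
  uniq L /\ {in L &, forall x y, e x y = is_edge_of (path_edges L) x y}.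

Definition hole (T : finType) (e : rel T) (L : seq T) : Prop :=
  [/\ 4 <= size L, uniq L &
      {in L &, forall x y, e x y = is_edge_of (cycle_edges L) x y}].

From mathcomp Require Import all_boot zify.

Set Implicit Arguments.
Unset Strict Implicit.
Unset Printing Implicit Defensive.

(* On an induced path or hole L the neighbourhood relation of G coincides with
   the edge relation of L, and an edge of L joins vertices whose positions in
   L differ by one (modulo |L| for a hole).  Three positions pairwise at
   distance one do not exist on a line, nor on a cycle of length at least 4,
   so the two ends k0, k2 of the subpath k0 k1 k2 are not adjacent.  Hence
   j, k0, k2, u would be a claw unless u is adjacent to k0 or k2. *)

Lemma mem_zip_nth (S T : eqType) (s : seq S) (t : seq T) x y :
  (x, y) \in zip s t ->
  exists2 i, i < minn (size s) (size t) & x = nth x s i /\ y = nth y t i.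
Proof.
move=> /(nthP (x, y)) [i lt_i]; rewrite nth_zip_cond lt_i -size_zip => -[xE yE].
by exists i.
Qed.

Lemma index_path_edges (T : eqType) (L : seq T) x y : uniq L ->
  (x, y) \in path_edges L -> index y L = (index x L).+1.
Proof.
case: L => [//|a s] uniq_L /mem_zip_nth [i lt_is [-> ->]].
have {}lt_is : i < size s by move: lt_is => /=; lia.
by rewrite nth_behead !index_uniq //= ltnW.
Qed.

Lemma index_cycle_edges (T : eqType) (L : seq T) x y : uniq L ->
  (x, y) \in cycle_edges L ->
  (index x L).+1 < size L /\ index y L = (index x L).+1
  \/ (index x L).+1 = size L /\ index y L = 0.
Proof.
case: L => [//|a s] uniq_L /mem_zip_nth [i].
rewrite size_rot minnn => lt_is [-> ->].
rewrite rot1_cons nth_rcons index_uniq //.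
have [lt_is' | ge_is] := ltnP i (size s).
  by left; rewrite -[nth y s i]/(nth y (a :: s) i.+1) index_uniq.
have -> : i = size s by move: lt_is => /=; lia.
by right; rewrite eqxx /= eqxx.
Qed.

Lemma path_edges_triangle_free (T : eqType) (L : seq T) a b c : uniq L ->
  is_edge_of (path_edges L) a b -> is_edge_of (path_edges L) b c ->
  ~~ is_edge_of (path_edges L) a c.
Proof.
move=> uniq_L; rewrite /is_edge_of.
move=> /orP[] /(index_path_edges uniq_L) ab
       /orP[] /(index_path_edges uniq_L) bc.
all: by apply/negP => /orP[] /(index_path_edges uniq_L) ac; lia.
Qed.

Lemma cycle_edges_triangle_free (T : eqType) (L : seq T) a b c :
  uniq L -> 4 <= size L ->
  is_edge_of (cycle_edges L) a b -> is_edge_of (cycle_edges L) b c ->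
  ~~ is_edge_of (cycle_edges L) a c.
Proof.
move=> uniq_L size_L; rewrite /is_edge_of.
move=> /orP[] /(index_cycle_edges uniq_L) ab
       /orP[] /(index_cycle_edges uniq_L) bc.
all: by apply/negP => /orP[] /(index_cycle_edges uniq_L) ac; lia.
Qed.

Lemma induced_path_triangle_free (T : finType) (e : rel T) (L : seq T) a b c :
  induced_path e L -> a \in L -> c \in L ->
  is_edge_of (path_edges L) a b -> is_edge_of (path_edges L) b c -> ~~ e a c.
Proof.
move=> [uniq_L eL] aL cL ab bc.
by rewrite eL //; apply: path_edges_triangle_free bc.
Qed.

Lemma hole_triangle_free (T : finType) (e : rel T) (L : seq T) a b c :
  hole e L -> a \in L -> c \in L ->
  is_edge_of (cycle_edges L) a b -> is_edge_of (cycle_edges L) b c -> ~~ e a c.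
Proof.
move=> [size_L uniq_L eL] aL cL ab bc.
by rewrite eL //; apply: cycle_edges_triangle_free bc.
Qed.

Lemma claw_free_nonadj_neighbours (T : finType) (e : rel T) x a c u :
  symmetric e -> claw_free e -> a != c -> u != a -> u != c ->
  e x a -> e x c -> e x u -> ~~ e a c -> e u a || e u c.
Proof.
move=> e_sym claw_e ac; rewrite !(eq_sym u) => ua uc xa xc xu /negbTE nac.
have := claw_e x a c u ac uc ua xa xc xu.
by rewrite nac (e_sym c) (e_sym a) /= orbC.
Qed.

Theorem corollary2 (T : finType) (e : rel T)
    (e_sym : symmetric e) (e_irr : irreflexive e)
    (hclaw : claw_free e)
    (L : seq T) (j k0 k1 k2 u : T) :
    ((induced_path e L /\ is_edge_of (path_edges L) k0 k1
                        /\ is_edge_of (path_edges L) k1 k2)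
     \/ (hole e L /\ is_edge_of (cycle_edges L) k0 k1
                  /\ is_edge_of (cycle_edges L) k1 k2)) ->
    j \notin L ->
    k0 \in L -> k1 \in L -> k2 \in L ->
    k0 != k1 -> k1 != k2 -> k0 != k2 ->
    e j k0 -> e j k1 -> e j k2 ->
    u \in L -> e j u -> u \notin [:: k0; k1; k2] ->
    e u k0 || e u k2.
Proof.
move=> L_k0k1k2 _ k0L _ k2L _ _ k0k2 jk0 _ jk2 _ ju.
rewrite !inE !negb_or => /and3P[uk0 _ uk2].
have nk0k2 : ~~ e k0 k2.
  case: L_k0k1k2 => [[path_L [k0k1 k1k2]] | [hole_L [k0k1 k1k2]]].
    exact: induced_path_triangle_free k0k1 k1k2.
  exact: hole_triangle_free k0k1 k1k2.
exact: claw_free_nonadj_neighbours e_sym hclaw k0k2 uk0 uk2 jk0 jk2 ju nk0k2.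
Qed.
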